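(* If $G$ and $H$ are graphs without isolated vertices, then $$\rho(G\times H)\geq\max\{\rho_o(G)\rho(H),\ \rho_o(H)\rho(G)\}.$$
   Context: All graphs are finite and simple. A packing of $G$ is a set $P\subseteq V(G)$ with $N[u]\cap N[v]=\emptyset$ for all distinct $u,v\in P$ ($N[\cdot]$ the closed neighborhood); $\rho(G)$ is the maximum size of a packing. An open packing is a set whose vertices have pairwise disjoint open neighborhoods; $\rho_o(G)$ is its maximum size. The direct product $G\times H$ has vertex set $V(G)\times V(H)$, with $(g,h)$ adjacent to $(g',h')$ iff $gg'\in E(G)$ and $hh'\in E(H)$. *)

From mathcomp Require Import all_boot.
Set Implicit Arguments. Unset Strict Implicit. Unset Printing Implicit Defensive.

Definition simple_graph (T : finType) (e : rel T) : Prop :=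
  symmetric e /\ irreflexive e.

Definition open_nbhd (T : finType) (e : rel T) (v : T) : {set T} :=
  [set w | e v w].
Definition closed_nbhd (T : finType) (e : rel T) (v : T) : {set T} :=
  v |: open_nbhd e v.

Definition no_isolated (T : finType) (e : rel T) : Prop :=
  forall v : T, exists w : T, e v w.

Definition packing (T : finType) (e : rel T) (P : {set T}) : bool :=
  [forall u in P, forall v in P,
     (u != v) ==> [disjoint closed_nbhd e u & closed_nbhd e v]].

Definition open_packing (T : finType) (e : rel T) (P : {set T}) : bool :=
  [forall u in P, forall v in P,
     (u != v) ==> [disjoint open_nbhd e u & open_nbhd e v]].

Definition packing_number (T : finType) (e : rel T) : nat :=
  \max_(P : {set T} | packing e P) #|P|.
Definition open_packing_number (T : finType) (e : rel T) : nat :=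
  \max_(P : {set T} | open_packing e P) #|P|.

Definition direct_prod (T1 T2 : finType) (e1 : rel T1) (e2 : rel T2)
  : rel (T1 * T2)%type :=
  fun x y => e1 x.1 y.1 && e2 x.2 y.2.

From mathcomp Require Import all_boot.

(* The heart of the argument is that for an open packing O of G and a packing
   P of H, the product O x P is a packing of G x H: two of its vertices with
   a common closed neighbour first agree in the H-coordinate (closed
   neighbourhoods in G x H project into closed neighbourhoods of H, which
   are disjoint on P), and then in the G-coordinate (either the common
   neighbour is one of them, forcing a loop in H, or it is a common open
   neighbour in G of two vertices of O).  The bound rho_o(G) rho(H) follows
   by taking optimal O and P; the other bound is its mirror image, obtained
   by transporting packings along the isomorphism (x, y) |-> (y, x) between
   H x G and G x H. *)

Set Implicit Arguments.
Unset Strict Implicit.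
Unset Printing Implicit Defensive.

Section NeighbourhoodPackings.

Variable T : finType.

Lemma disjoint_nbhdsP (N : T -> {set T}) (P : {set T}) :
  reflect (forall u v x, u \in P -> v \in P -> x \in N u -> x \in N v -> u = v)
    [forall u in P, forall v in P, (u != v) ==> [disjoint N u & N v]].
Proof.
apply: (iffP forall_inP) => [hP u v x uP vP xu xv | hP u uP].
  apply/eqP; apply: contraTT (forall_inP (hP u uP) v vP) => neq_uv.
  by rewrite neq_uv /=; apply/pred0Pn; exists x; apply/andP.
apply/forall_inP => v vP; apply/implyP => neq_uv; apply/pred0P => x /=.
by apply: contraNF neq_uv => /andP[xu xv]; apply/eqP/(hP u v x).
Qed.

Variable e : rel T.

Lemma packingP (P : {set T}) :
  reflect (forall u v x, u \in P -> v \in P ->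
             x \in closed_nbhd e u -> x \in closed_nbhd e v -> u = v)
    (packing e P).
Proof. exact: disjoint_nbhdsP. Qed.

Lemma open_packingP (P : {set T}) :
  reflect (forall u v x, u \in P -> v \in P -> e u x -> e v x -> u = v)
    (open_packing e P).
Proof.
apply: (iffP (disjoint_nbhdsP _ _)) => hP u v x uP vP.
  by move=> ux vx; apply: (hP u v x); rewrite // inE.
by rewrite !inE; apply: hP.
Qed.

Lemma closed_nbhdE (v x : T) : (x \in closed_nbhd e v) = (x == v) || e v x.
Proof. by rewrite !inE. Qed.

(* The maximum defining the (open) packing number is attained, since the
   empty set is always an (open) packing. *)
Lemma max_card_attained (p : pred {set T}) :
  p set0 -> exists2 P, p P & \max_(P | p P) #|P| = #|P|.
Proof.
move=> p0; have [|P pP ->] := @eq_bigmax_cond _ p (fun P => #|P|).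
  by apply/card_gt0P; exists set0.
by exists P.
Qed.

Lemma packing_number_attained :
  exists2 P, packing e P & packing_number e = #|P|.
Proof. by apply: max_card_attained; apply/packingP => u v x; rewrite inE. Qed.

Lemma open_packing_number_attained :
  exists2 P, open_packing e P & open_packing_number e = #|P|.
Proof.
by apply: max_card_attained; apply/open_packingP => u v x; rewrite inE.
Qed.

Lemma packing_number_ge (P : {set T}) :
  packing e P -> #|P| <= packing_number e.
Proof. exact: leq_bigmax_cond. Qed.

End NeighbourhoodPackings.

Section DirectProduct.

Variables (T1 T2 : finType) (e1 : rel T1) (e2 : rel T2).

Lemma closed_nbhd_direct_prodE (u x : T1 * T2) :
  (x \in closed_nbhd (direct_prod e1 e2) u)
  = (x == u) || (e1 u.1 x.1 && e2 u.2 x.2).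
Proof. exact: closed_nbhdE. Qed.

Lemma closed_nbhd_direct_prod_snd (u x : T1 * T2) :
  x \in closed_nbhd (direct_prod e1 e2) u -> x.2 \in closed_nbhd e2 u.2.
Proof.
rewrite closed_nbhd_direct_prodE closed_nbhdE.
by case/orP => [/eqP -> | /andP[_ ->]]; rewrite ?eqxx ?orbT.
Qed.

Lemma open_packing_X_packing (O : {set T1}) (P : {set T2}) :
  irreflexive e2 -> open_packing e1 O -> packing e2 P ->
  packing (direct_prod e1 e2) (setX O P).
Proof.
move=> irr2 /open_packingP hO /packingP hP.
apply/packingP => -[a p] [b q] x /setXP[aO pP] /setXP[bO qP] xu xv.
have eq_pq : p = q.
  exact: hP p q x.2 pP qP (closed_nbhd_direct_prod_snd xu)
                          (closed_nbhd_direct_prod_snd xv).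
subst q; move: xu xv; rewrite !closed_nbhd_direct_prodE /=.
case/orP => [/eqP -> | /andP[ax px]]; case/orP => [/eqP // | /andP[bx px']].
- by rewrite /= irr2 in px'.
- by move=> eq_x; move: px; rewrite eq_x /= irr2.
- by rewrite (hO a b x.1 aO bO ax bx).
Qed.

Definition swap_pair (x : T2 * T1) : T1 * T2 := (x.2, x.1).

Lemma swap_pair_inj : injective swap_pair.
Proof. by move=> [? ?] [? ?] [-> ->]. Qed.

Lemma packing_swap (P : {set T2 * T1}) :
  packing (direct_prod e2 e1) P ->
  packing (direct_prod e1 e2) (swap_pair @: P).
Proof.
have swap_nbhd (u x : T2 * T1) :
    (swap_pair x \in closed_nbhd (direct_prod e1 e2) (swap_pair u))
    = (x \in closed_nbhd (direct_prod e2 e1) u).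
  by rewrite !closed_nbhdE (inj_eq swap_pair_inj) /direct_prod andbC.
move/packingP => hP; apply/packingP => _ _ x /imsetP[u uP ->] /imsetP[v vP ->].
rewrite -[x](_ : swap_pair (x.2, x.1) = x); last by case: x.
by rewrite !swap_nbhd => xu xv; rewrite (hP u v (x.2, x.1)).
Qed.

End DirectProduct.

Theorem mainTheorem13 (T1 T2 : finType) (e1 : rel T1) (e2 : rel T2) :
  simple_graph e1 -> simple_graph e2 ->
  no_isolated e1 -> no_isolated e2 ->
  maxn (open_packing_number e1 * packing_number e2)
       (open_packing_number e2 * packing_number e1)
  <= packing_number (direct_prod e1 e2).
Proof.
move=> [_ irr1] [_ irr2] _ _.
have [O1 hO1 ->] := open_packing_number_attained e1.
have [O2 hO2 ->] := open_packing_number_attained e2.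
have [P1 hP1 ->] := packing_number_attained e1.
have [P2 hP2 ->] := packing_number_attained e2.
rewrite geq_max -!cardsX; apply/andP; split.
- exact/packing_number_ge/open_packing_X_packing.
- rewrite -(card_imset _ (@swap_pair_inj T1 T2)).
  exact/packing_number_ge/packing_swap/open_packing_X_packing.
Qed.
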